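(* Assume in addition that $p_j\ge -w_j$ for every $j\in J$. Let $S^*$ be an optimal solution of the Target Associated $k$-Set problem and let $\hat S$ be the set of genes returned by the Greedy algorithm. Then $W(\hat S)\ge W(S^* )/k$.
   Context: Let $J$ be a finite set of samples and $G$ a finite set of genes; for each $g\in G$ a set $A_g\subseteq J$ is given. Each $j\in J$ has a weight $w_j\in\mathbb{R}$ and penalty $p_j>0$, and $k$ is a positive integer. For $S\subseteq G$ and $j\in J$, let $c_S(j)=|\{g\in S: j\in A_g\}|$, $U(S)=\bigcup_{g\in S}A_g$, and $$W(S)=\sum_{j\in U(S)} w_j-\sum_{j\in U(S)}(c_S(j)-1)\,p_j .$$ The Target Associated $k$-Set problem asks for $S\subseteq G$ with $|S|\le k$ maximizing $W(S)$ (all $W$ values are computed with the original weights $w_j$). The Greedy algorithm: maintain current weights $\tilde w_j$, initialized to $\tilde w_j=w_j$, and a current solution $\hat S=\emptyset$. For $\ell=1,\dots,k$: compute $\tilde W(A_g)=\sum_{j\in A_g}\tilde w_j$ for every $g\in G\setminus \hat S$; if no $g$ has $\tilde W(A_g)>0$, stop; otherwise pick $g$ maximizing $\tilde W(A_g)$, add $g$ to $\hat S$, and set $\tilde w_j\leftarrow -p_j$ for all $j\in A_g$. The output is $\hat S$. (The paper's choice of penalties — $p_j$ equal to the average of the positive normalized weights when $w_j>0$, and $p_j=|w_j|$ when $w_j<0$ — satisfies $p_j\ge -w_j$.) *)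

From HB Require Import structures.
From mathcomp Require Import all_boot all_order all_algebra.
Set Implicit Arguments. Unset Strict Implicit. Unset Printing Implicit Defensive.
Import Order.TTheory GRing.Theory Num.Theory.
Local Open Scope ring_scope.

Section TAkS.
Variables (R : realFieldType) (J G : finType) (A : G -> {set J}) (w p : J -> R).

Definition cnt (S : {set G}) (j : J) : nat := #|[set g in S | j \in A g]|.

Definition Uset (S : {set G}) : {set J} := \bigcup_(g in S) A g.

Definition Wval (S : {set G}) : R :=
  \sum_(j in Uset S) w j - \sum_(j in Uset S) ((cnt S j)%:R - 1) * p j.

Definition upd (wt : J -> R) (g : G) : J -> R :=
  fun j => if j \in A g then - p j else wt j.

Definition curw (s : seq G) : J -> R := foldl upd w s.

Definition tW (s : seq G) (g : G) : R := \sum_(j in A g) curw s j.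

(* s = g_1 ... g_m is a possible run (any tie-breaking) of Greedy with budget k *)
Definition greedy_run (k : nat) (s : seq G) : Prop :=
  [/\ (size s <= k)%N,
      (forall (pre post : seq G) (g : G), s = pre ++ g :: post ->
         [/\ g \notin pre, 0 < tW pre g &
             forall h : G, h \notin pre -> tW pre h <= tW pre g]) &
      (size s = k \/ forall h : G, h \notin s -> tW s h <= 0)].
End TAkS.

(* Adding a gene g outside S changes W by the sum over A_g of -p_j on samples
   already covered and of w_j on the others, which is exactly the greedy score
   W~(A_g) computed with the current weights.  Hence W grows along the greedy
   run and the output is worth at least the first score, max_g W(A_g).
   Conversely, since p_j >= -w_j, W is subadditive on genes:
   W(S) <= sum_(g in S) W(A_g) <= k max_g W(A_g) whenever |S| <= k.  If Greedy
   stops at once, every W(A_g) is nonpositive and the same bound gives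
   W(S) <= 0. *)

From HB Require Import structures.
From mathcomp Require Import all_boot all_order all_algebra.
From mathcomp Require Import ring lra.
Set Implicit Arguments. Unset Strict Implicit. Unset Printing Implicit Defensive.
Import Order.TTheory GRing.Theory Num.Theory.
Local Open Scope ring_scope.

Section GreedyIncrements.
Variables (R : realFieldType) (J G : finType) (A : G -> {set J}) (w p : J -> R).

Lemma cnt_gt0 (S : {set G}) (j : J) : (0 < cnt A S j)%N = (j \in Uset A S).
Proof.
rewrite /cnt card_gt0; apply/set0Pn/bigcupP.
  by move=> [g]; rewrite inE => /andP[gS jA]; exists g.
by move=> [g gS jA]; exists g; rewrite inE gS.
Qed.

Lemma cnt_eq0 (S : {set G}) (j : J) : j \notin Uset A S -> cnt A S j = 0%N.
Proof. by move=> jU; apply/eqP; rewrite -leqn0 leqNgt cnt_gt0. Qed.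

Lemma Uset_U1 (g : G) (S : {set G}) : Uset A (g |: S) = A g :|: Uset A S.
Proof. by rewrite /Uset bigcup_setU big_set1. Qed.

Lemma cnt_U1 (g : G) (S : {set G}) (j : J) :
  g \notin S -> cnt A (g |: S) j = (cnt A S j + (j \in A g))%N.
Proof.
move=> gS; rewrite /cnt; case: (boolP (j \in A g)) => jA.
  have -> : [set h in g |: S | j \in A h] = g |: [set h in S | j \in A h].
    by apply/setP => h; rewrite !inE; case: eqP => // ->; rewrite jA.
  by rewrite cardsU1 inE (negPf gS) addnC.
rewrite addn0; suff -> : [set h in g |: S | j \in A h] = [set h in S | j \in A h] by [].
apply/setP => h; rewrite !inE.
by case: eqP => // ->; rewrite (negPf jA) (negPf gS).
Qed.

Lemma WvalE (S : {set G}) : Wval A w p S =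
  \sum_j ((j \in Uset A S)%:R * w j
          - ((cnt A S j)%:R - (j \in Uset A S)%:R) * p j).
Proof.
rewrite /Wval -sumrB big_mkcond /=; apply: eq_bigr => j _.
case: ifP => jU; first by rewrite mul1r.
by rewrite cnt_eq0 ?jU // !mul0r subrr mul0r subrr.
Qed.

Lemma Wval_U1 (g : G) (S : {set G}) : g \notin S ->
  Wval A w p (g |: S) =
  Wval A w p S + \sum_(j in A g) (if j \in Uset A S then - p j else w j).
Proof.
move=> gS; rewrite !WvalE [X in _ + X]big_mkcond -big_split /=.
apply: eq_bigr => j _; rewrite Uset_U1 inE cnt_U1 //.
case: (boolP (j \in A g)) => jA /=; last by rewrite addn0 addr0.
case: (boolP (j \in Uset A S)) => jU /=; first by rewrite natrD; ring.
by rewrite cnt_eq0 //=; ring.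
Qed.

Lemma Wval0 : Wval A w p set0 = 0.
Proof. by rewrite /Wval /Uset !big_set0 subrr. Qed.

Lemma set_nil : [set x in [::] : seq G] = set0.
Proof. by apply/setP => x; rewrite !inE. Qed.

Lemma set_rcons (s : seq G) (g : G) : [set x in rcons s g] = g |: [set x in s].
Proof. by apply/setP => x; rewrite !inE mem_rcons in_cons. Qed.

Lemma curwE (s : seq G) (j : J) :
  curw A w p s j = if j \in Uset A [set x in s] then - p j else w j.
Proof.
elim/last_ind: s => [|s g IH]; first by rewrite set_nil /Uset big_set0 inE.
rewrite /curw foldl_rcons -/(curw A w p s) /upd IH set_rcons Uset_U1 inE.
by case: (j \in A g).
Qed.

Lemma Wval_rcons (s : seq G) (g : G) : g \notin s ->
  Wval A w p [set x in rcons s g] = Wval A w p [set x in s] + tW A w p s g.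
Proof.
move=> gs; rewrite set_rcons Wval_U1 ?inE //; congr (_ + _).
by apply: eq_bigr => j _; rewrite curwE.
Qed.

Lemma Wval_prefix_le (s : seq G) :
    (forall pre post g, s = pre ++ g :: post -> g \notin pre /\ 0 <= tW A w p pre g) ->
  forall t u, s = t ++ u -> Wval A w p [set x in t] <= Wval A w p [set x in s].
Proof.
elim/last_ind: s => [|s g IH] steps t u.
  by case: t => // _; rewrite set_nil.
case/lastP: u => [|u g']; first by rewrite cats0 => ->.
rewrite -rcons_cat => /rcons_inj[es _].
have [gs tpos] := steps s [::] g (esym (cats1 s g)).
rewrite Wval_rcons // -(addr0 (Wval A w p [set x in t])) lerD //.
apply: IH es => pre post h es'.
by apply: steps; rewrite es' rcons_cat.
Qed.

Lemma Wval_le_card_mul (M : R) (S : {set G}) :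
    (forall j, - w j <= p j) -> (forall g, \sum_(j in A g) w j <= M) ->
  Wval A w p S <= #|S|%:R * M.
Proof.
move=> hpw leM; elim: {S}_.+1 {-2}S (ltnSn #|S|) => // n IH S leS.
have [->|[g gS]] := set_0Vmem S; first by rewrite Wval0 cards0 mul0r.
rewrite -(setD1K gS); have ngS : g \notin S :\ g by rewrite setD11.
rewrite Wval_U1 // cardsU1 ngS natrD mulrDl mul1r addrC lerD //.
  apply: le_trans (leM g); apply: ler_sum => j _.
  by case: ifP => // _; have := hpw j; lra.
by apply: IH; rewrite -ltnS (leq_trans _ leS) // ltnS (cardsD1 g S) gS.
Qed.

End GreedyIncrements.

Theorem mainTheorem3 (R : realFieldType) (J G : finType) (A : G -> {set J})
    (w p : J -> R) (k : nat)
    (hp : forall j, 0 < p j) (hpw : forall j, - w j <= p j) (hk : (0 < k)%N)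
    (Sopt : {set G})
    (hSopt_card : (#|Sopt| <= k)%N)
    (hSopt_opt : forall S : {set G}, (#|S| <= k)%N -> Wval A w p S <= Wval A w p Sopt)
    (s : seq G) (hs : greedy_run A w p k s) :
  Wval A w p Sopt / k%:R <= Wval A w p [set g in s].
Proof.
case: hs => _ steps stop; rewrite ler_pdivrMr ?ltr0n //.
case: s steps stop => [|g1 post] steps stop.
  have nonpos h : tW A w p [::] h <= 0.
    by case: stop => [k0|-> //]; rewrite -k0 in hk.
  have := Wval_le_card_mul Sopt hpw nonpos.
  by rewrite set_nil Wval0 mulr0 mul0r.
have [_ pos1 max1] := steps [::] post g1 erefl.
have run_steps pre post' g : g1 :: post = pre ++ g :: post' ->
    g \notin pre /\ 0 <= tW A w p pre g.
  by move=> es; have [? ? _] := steps _ _ _ es; split; [|exact: ltW].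
have first_le : tW A w p [::] g1 <= Wval A w p [set x in g1 :: post].
  have := Wval_prefix_le run_steps (t := [:: g1]) erefl.
  by rewrite -[[:: g1]]/(rcons [::] g1) Wval_rcons // set_nil Wval0 add0r.
apply: le_trans (Wval_le_card_mul Sopt hpw (fun h => max1 h isT)) _.
rewrite mulrC; apply: le_trans (ler_wpM2r (ler0n _ _) first_le).
by rewrite ler_wpM2l ?ler_nat // ltW.
Qed.
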